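(* Let $G=(S,C,H)$ be a spider graph with weight $r$ (thin with $r\ge2$, or thick with $r\ge3$) and let $T_H$ be an MDNS of $G[H]$. Then $\tilde\gamma_{gr}^{\times 2}(G)=\tilde\gamma_{gr}^{\times 2}(G[C\cup S])+\tilde\gamma_{gr}^{\times 2}(G[H])$. Moreover, if $G$ is thin, $T_H\oplus(c_1,\dots,c_r,s_1,\dots,s_r)$ is an MDNS of $G$, and if $G$ is thick, $T_H\oplus(s_1,\dots,s_r,c_1,c_2)$ is an MDNS of $G$.
   Context: Graphs are finite, simple, undirected; $N[v]$ is the closed neighborhood. A sequence of distinct vertices $(v_1,\dots,v_k)$ is a double neighborhood sequence (DNS) if for each $i$ some $u\in N[v_i]$ satisfies $|\{j<i:u\in N[v_j]\}|\le 1$; an MDNS is a DNS of maximum length and $\tilde\gamma_{gr}^{\times 2}$ is that length. For the graph with no vertices, the MDNS is the empty sequence and $\tilde\gamma_{gr}^{\times 2}=0$. $\oplus$ denotes concatenation of sequences. A spider graph $G=(S,C,H)$: $V(G)$ is partitioned into $S=\{s_1,\dots,s_r\}$ (stable), $C=\{c_1,\dots,c_r\}$ (clique), $H$ (possibly empty, arbitrary edges inside), $r\ge2$, every vertex of $C$ adjacent to every vertex of $H$, no edges between $H$ and $S$; it is thin if $s_i c_j\in E$ iff $i=j$, thick if $s_ic_j\in E$ iff $i\neq j$. $r$ is the weight. *)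

From mathcomp Require Import all_boot.
Set Implicit Arguments. Unset Strict Implicit. Unset Printing Implicit Defensive.

Section DNS.
Variables (T : finType) (e : rel T).

Definition inN (v u : T) : bool := (u == v) || e v u.

(* DNS condition in the induced subgraph G[X]: closed neighbourhoods are
   N[v] ∩ X.  [dns_ok X pre rest] checks each element v of rest, with
   [pre] the vertices chosen before it. *)
Fixpoint dns_ok (X : {set T}) (pre rest : seq T) : bool :=
  match rest with
  | [::] => true
  | v :: rest' =>
      [exists u, [&& u \in X, inN v u & count (fun w => inN w u) pre <= 1]]
      && dns_ok X (rcons pre v) rest'
  end.

Definition is_dns (X : {set T}) (s : seq T) : bool :=
  [&& uniq s, all (fun x => x \in X) s & dns_ok X [::] s].

(* maximum length of a DNS of G[X] (lengths are bounded by #|X|) *)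
Definition gamma_gr2 (X : {set T}) : nat :=
  \max_(n < #|X|.+1 | [exists t : n.-tuple T, is_dns X t]) n.

Definition is_mdns (X : {set T}) (s : seq T) : Prop :=
  is_dns X s /\ forall t : seq T, is_dns X t -> size t <= size s.

End DNS.

(* Spider graph G = (S, C, H) of weight r on vertex type T, with
   S = {s 0, ..., s (r-1)}, C = {c 0, ..., c (r-1)} (0-indexed). *)
Definition spider (T : finType) (e : rel T) (r : nat) (s c : nat -> T)
    (H : {set T}) : Prop :=
  [/\ 2 <= r,
      {in [pred i | i < r] &, injective s},
      {in [pred i | i < r] &, injective c},
      (forall i j, i < r -> j < r -> s i != c j) &
      (forall i, i < r -> s i \notin H /\ c i \notin H)]
  /\ (forall x, x \in H \/ (exists2 i, i < r & x = s i)
                         \/ (exists2 i, i < r & x = c i))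
  /\ [/\ (forall i j, i < r -> j < r -> ~~ e (s i) (s j)),
      (forall i j, i < r -> j < r -> i != j -> e (c i) (c j)) &
      (forall i h, i < r -> h \in H -> e (c i) h /\ ~~ e h (s i))].

Definition spider_thin (T : finType) (e : rel T) (r : nat) (s c : nat -> T) :=
  forall i j, i < r -> j < r -> e (s i) (c j) = (i == j).

Definition spider_thick (T : finType) (e : rel T) (r : nat) (s c : nat -> T) :=
  forall i j, i < r -> j < r -> e (s i) (c j) = (i != j).

Definition CS_set (T : finType) (r : nat) (s c : nat -> T) : {set T} :=
  [set x | x \in map s (iota 0 r) ++ map c (iota 0 r)].

From mathcomp Require Import all_boot zify.
Set Implicit Arguments. Unset Strict Implicit. Unset Printing Implicit Defensive.

(* Call u a footprint of v in a DNS if u lies in N[v] and at most one earlier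
   vertex dominates u.  Every vertex of C sees all of H and no vertex of S sees
   H, so the H-part of a DNS of G is a DNS of G[H]: if v in H has a footprint
   c_i, then every earlier vertex of H dominates c_i, so at most one of them
   precedes v and v is its own footprint in G[H].  Hence a DNS of G has at
   most gamma(G[H]) + m vertices, where m bounds the number of its vertices
   outside H.  For thin spiders m = 2r trivially.  For thick spiders, once two
   vertices of C are chosen every vertex of H and C is dominated twice, so a
   third vertex c_a of C needs a footprint s_j not chosen yet, and after c_a
   no vertex has a footprint at all; thus m = r + 2.  The displayed sequences
   reach m after any prefix taken from H, in G as well as in G[C u S],
   because H does not dominate S. *)

Lemma split_at_count (A : Type) (P : pred A) k (t : seq A) : k < count P t ->
  exists p v q, [/\ t = p ++ v :: q, P v & count P p = k].
Proof.
elim: t k => [|x t IH] k //=.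
case Px: (P x) => /=.
  case: k => [|k] lt; first by exists [::], x, t.
  have [p [v [q [-> Pv cp]]]] := IH k lt.
  by exists (x :: p), v, q; rewrite /= Px cp.
move=> lt; have [p [v [q [-> Pv cp]]]] := IH k lt.
by exists (x :: p), v, q; rewrite /= Px cp.
Qed.

Lemma count_pred0_in (A : eqType) (a : pred A) s :
  {in s, forall x, ~~ a x} -> count a s = 0.
Proof. by move=> /hasPn; rewrite has_count lt0n negbK => /eqP. Qed.

Lemma uniq_count_mem_le (A : eqType) (s t : seq A) :
  uniq t -> count [in s] t <= size s.
Proof.
move=> ut; rewrite -size_filter; apply: uniq_leq_size; first exact: filter_uniq.
by move=> x; rewrite mem_filter => /andP[].
Qed.

Section DoubleNeighbourhoodSequences.
Variables (T : finType) (e : rel T).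

Definition ndom (pre : seq T) (u : T) : nat := count (fun w => inN e w u) pre.

Definition dns_step (X : {set T}) (pre : seq T) (v : T) : bool :=
  [exists u, [&& u \in X, inN e v u & ndom pre u <= 1]].

Lemma inN_refl x : inN e x x.
Proof. by rewrite /inN eqxx. Qed.

Lemma ndom_cat p q u : ndom (p ++ q) u = ndom p u + ndom q u.
Proof. exact: count_cat. Qed.

Lemma dns_ok_cons X pre v rest :
  dns_ok e X pre (v :: rest) = dns_step X pre v && dns_ok e X (rcons pre v) rest.
Proof. by []. Qed.

Lemma dns_ok_cat X pre p q :
  dns_ok e X pre (p ++ q) = dns_ok e X pre p && dns_ok e X (pre ++ p) q.
Proof.
elim: p pre => [|v p IH] pre /=; first by rewrite cats0.
by rewrite IH cat_rcons andbA.
Qed.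

Lemma dns_ok_subset (X Y : {set T}) pre rest :
  X \subset Y -> dns_ok e X pre rest -> dns_ok e Y pre rest.
Proof.
move=> sXY; elim: rest pre => [|v rest IH] pre //=.
case/andP=> /existsP[u /and3P[uX vu u_dom]] ok; rewrite IH // andbT.
by apply/existsP; exists u; rewrite (subsetP sXY) ?vu ?u_dom.
Qed.

Lemma dns_ok_map_iota X pre (f : nat -> T) n :
  (forall i, i < n -> dns_step X (pre ++ map f (iota 0 i)) (f i)) ->
  dns_ok e X pre (map f (iota 0 n)).
Proof.
elim: n => [|n IH] step //.
rewrite -addn1 iotaD map_cat dns_ok_cat IH => [|i lt]; last exact/step/leqW.
by rewrite add0n /= andbT; apply: step.
Qed.

Lemma dns_ok_filter X Y (P : pred T) pre rest :
  (forall pre v, P v -> dns_step X pre v -> dns_step Y (filter P pre) v) ->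
  dns_ok e X pre rest -> dns_ok e Y (filter P pre) (filter P rest).
Proof.
move=> stepP; elim: rest pre => [|v rest IH] pre //.
rewrite dns_ok_cons => /andP[step_v /IH]; rewrite /= filter_rcons.
by case: ifP => // Pv ok; rewrite dns_ok_cons ok andbT; apply: stepP.
Qed.

Lemma gamma_gr2_mdns X s : is_mdns e X s -> gamma_gr2 e X = size s.
Proof.
case=> ds s_max; apply/eqP; rewrite eqn_leq; apply/andP; split.
  by apply/bigmax_leqP => i /existsP[t dt]; rewrite -(size_tuple t); apply: s_max.
have s_le : size s < #|X|.+1.
  case/and3P: ds => us /allP sX _; rewrite ltnS -(card_uniqP us).
  by apply/subset_leq_card/subsetP => x /sX.
apply: (@leq_bigmax_cond _ _ (fun n : 'I_#|X|.+1 => val n) (Ordinal s_le)).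
by apply/existsP; exists (in_tuple s).
Qed.

End DoubleNeighbourhoodSequences.

Section Spider.
Variables (T : finType) (e : rel T) (r : nat) (s c : nat -> T) (H : {set T}).
Hypotheses (e_sym : symmetric e) (G_spider : spider e r s c H).

Let r_ge2 : 2 <= r.
Proof. by case: G_spider => [[]]. Qed.
Let s_inj : {in [pred i | i < r] &, injective s}.
Proof. by case: G_spider => [[]]. Qed.
Let c_inj : {in [pred i | i < r] &, injective c}.
Proof. by case: G_spider => [[]]. Qed.
Let s_neq_c i j : i < r -> j < r -> s i != c j.
Proof. by case: G_spider => [[_ _ _ /(_ i j)]]. Qed.
Let SC_notin_H i : i < r -> s i \notin H /\ c i \notin H.
Proof. by case: G_spider => [[_ _ _ _ /(_ i)]]. Qed.
Let spider_cover x : x \in H \/ (exists2 i, i < r & x = s i)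
                             \/ (exists2 i, i < r & x = c i).
Proof. by case: G_spider => _ [/(_ x)]. Qed.
Let S_stable i j : i < r -> j < r -> ~~ e (s i) (s j).
Proof. by case: G_spider => _ [_ [/(_ i j)]]. Qed.
Let C_clique i j : i < r -> j < r -> i != j -> e (c i) (c j).
Proof. by case: G_spider => _ [_ [_ /(_ i j)]]. Qed.
Let CH_edges i h : i < r -> h \in H -> e (c i) h /\ ~~ e h (s i).
Proof. by case: G_spider => _ [_ [_ _ /(_ i h)]]. Qed.

Local Notation Sseq := (map s (iota 0 r)).
Local Notation Cseq := (map c (iota 0 r)).

Lemma Sseq_P x : reflect (exists2 i, i < r & x = s i) (x \in Sseq).
Proof.
apply: (iffP mapP) => [[i]|[i ir ->]]; last by exists i; rewrite ?mem_iota.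
by rewrite mem_iota => /andP[_ ir] ->; exists i.
Qed.

Lemma Cseq_P x : reflect (exists2 i, i < r & x = c i) (x \in Cseq).
Proof.
apply: (iffP mapP) => [[i]|[i ir ->]]; last by exists i; rewrite ?mem_iota.
by rewrite mem_iota => /andP[_ ir] ->; exists i.
Qed.

Lemma mem_Sseq i : i < r -> s i \in Sseq.
Proof. by move=> ir; apply/Sseq_P; exists i. Qed.

Lemma mem_Cseq i : i < r -> c i \in Cseq.
Proof. by move=> ir; apply/Cseq_P; exists i. Qed.

Lemma s_eqE i j : i < r -> j < r -> (s i == s j) = (i == j).
Proof. by move=> ir jr; apply/eqP/eqP => [|->] //; apply: s_inj. Qed.

Lemma c_eqE i j : i < r -> j < r -> (c i == c j) = (i == j).
Proof. by move=> ir jr; apply/eqP/eqP => [|->] //; apply: c_inj. Qed.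

Lemma inN_c_s k i : k < r -> i < r -> inN e (c k) (s i) = e (s i) (c k).
Proof. by move=> kr ir; rewrite /inN (negbTE (s_neq_c ir kr)) e_sym. Qed.

Lemma inN_s_s k i : k < r -> i < r -> inN e (s k) (s i) = (k == i).
Proof. by move=> kr ir; rewrite /inN (negbTE (S_stable kr ir)) orbF s_eqE // eq_sym. Qed.

Lemma inN_H_s w i : w \in H -> i < r -> inN e w (s i) = false.
Proof.
move=> wH ir; rewrite /inN (negbTE (proj2 (CH_edges ir wH))) orbF.
by apply: contraTF wH => /eqP <-; case: (SC_notin_H ir).
Qed.

Lemma inN_H_c w i : w \in H -> i < r -> inN e w (c i).
Proof. by move=> wH ir; rewrite /inN e_sym (proj1 (CH_edges ir wH)) orbT. Qed.

Lemma inN_c_c k i : k < r -> i < r -> inN e (c k) (c i).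
Proof.
move=> kr ir; rewrite /inN; case: (eqVneq i k) => [->|ik]; first by rewrite eqxx.
by rewrite C_clique 1?eq_sym ?orbT.
Qed.

Lemma s_notin_Cseq j : j < r -> s j \notin Cseq.
Proof. by move=> jr; apply/Cseq_P => -[i ir /eqP]; rewrite (negbTE (s_neq_c jr ir)). Qed.

Lemma c_notin_Sseq k : k < r -> c k \notin Sseq.
Proof.
by move=> kr; apply/Sseq_P => -[j jr /eqP]; rewrite eq_sym (negbTE (s_neq_c jr kr)).
Qed.

Lemma in_CS_set x : (x \in CS_set r s c) = (x \in Sseq) || (x \in Cseq).
Proof. by rewrite inE mem_cat. Qed.

Lemma CS_set_notin_H x : x \in CS_set r s c -> x \notin H.
Proof. by rewrite in_CS_set => /orP[/Sseq_P|/Cseq_P] [i ir ->]; case: (SC_notin_H ir). Qed.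

Lemma notin_H_CS_set x : x \notin H -> x \in CS_set r s c.
Proof.
rewrite in_CS_set; case: (spider_cover x) => [->|[]] // [i ir ->] _.
  by rewrite mem_Sseq.
by rewrite mem_Cseq ?orbT.
Qed.

Lemma uniq_Sseq : uniq Sseq.
Proof.
rewrite map_inj_in_uniq ?iota_uniq // => i j.
by rewrite !mem_iota => /andP[_ ir] /andP[_ jr]; apply: s_inj.
Qed.

Lemma uniq_Cseq : uniq Cseq.
Proof.
rewrite map_inj_in_uniq ?iota_uniq // => i j.
by rewrite !mem_iota => /andP[_ ir] /andP[_ jr]; apply: c_inj.
Qed.

Lemma count_Sseq_le t : uniq t -> count [in Sseq] t <= r.
Proof. by move/(uniq_count_mem_le Sseq); rewrite size_map size_iota. Qed.

Lemma count_Cseq_le t : uniq t -> count [in Cseq] t <= r.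
Proof. by move/(uniq_count_mem_le Cseq); rewrite size_map size_iota. Qed.

Lemma count_notin_H_le t :
  count (predC [in H]) t <= count [in Sseq] t + count [in Cseq] t.
Proof.
rewrite -count_predUI; apply: leq_trans (leq_addr _ _).
by apply: sub_count => x /notin_H_CS_set; rewrite in_CS_set.
Qed.

Lemma dns_step_H X pre v :
  v \in H -> dns_step e X pre v -> dns_step e H (filter [in H] pre) v.
Proof.
move=> vH /existsP[u /and3P[uX vu u_dom]].
have [uH | [i ir uE]] : u \in H \/ exists2 i, i < r & u = c i.
  case: (spider_cover u) => [|[[i ir uE]|]]; [by left | | by right].
  by move: vu; rewrite uE inN_H_s.
- apply/existsP; exists u; rewrite uH vu /=.
  exact: leq_trans (leq_count_subseq _ (filter_subseq _ _)) u_dom.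
- apply/existsP; exists v; rewrite vH inN_refl /=.
  apply: leq_trans (count_size _ _) _; rewrite size_filter.
  by apply: leq_trans u_dom; apply: sub_count => w wH; rewrite uE inN_H_c.
Qed.

Lemma is_dns_filter_H X t : is_dns e X t -> is_dns e H (filter [in H] t).
Proof.
case/and3P=> ut _ ok; rewrite /is_dns filter_uniq // filter_all.
exact: dns_ok_filter (@dns_step_H X) ok.
Qed.

Lemma two_C_ndom_gt1 pre x y u : x < r -> y < r ->
  filter [in Cseq] pre = [:: c x; c y] -> u \notin Sseq -> 1 < ndom e pre u.
Proof.
move=> xr yr pre_C uS; rewrite /ndom.
apply: leq_trans (leq_count_subseq _ (filter_subseq [in Cseq] pre)); rewrite pre_C /=.
case: (spider_cover u) => [uH | [[i ir uE] | [i ir ->]]].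
- by rewrite /inN (proj1 (CH_edges xr uH)) (proj1 (CH_edges yr uH)) !orbT.
- by move: uS; rewrite uE mem_Sseq.
- by rewrite !inN_c_c.
Qed.

Lemma ndom_H_s pre i : all [in H] pre -> i < r -> ndom e pre (s i) = 0.
Proof. by move=> /allP preH ir; apply: count_pred0_in => w /preH wH; rewrite inN_H_s. Qed.

Lemma ndom_S_prefix i n : i < r -> n <= i -> ndom e (map s (iota 0 n)) (s i) = 0.
Proof.
move=> ir ni; apply: count_pred0_in => w /mapP[k]; rewrite mem_iota => /andP[_ kn] ->.
have ki : k < i := leq_trans kn ni.
by rewrite inN_s_s ?ltn_eqF // (ltn_trans ki ir).
Qed.

Lemma ndom_Sseq_le1 i : i < r -> ndom e Sseq (s i) <= 1.
Proof.
move=> ir; rewrite /ndom count_map (eq_in_count (a2 := pred1 i)).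
  by rewrite count_uniq_mem ?iota_uniq ?leq_b1.
by move=> k; rewrite mem_iota => /andP[_ kr] /=; apply: inN_s_s.
Qed.

Section Thick.
Hypothesis thick : spider_thick e r s c.

Lemma thick_no_step_after_third_C X pre x y a w : x < r -> y < r -> a < r ->
  x != y -> x != a -> y != a -> filter [in Cseq] pre = [:: c x; c y] ->
  ~~ dns_step e X (rcons pre (c a)) w.
Proof.
move=> xr yr ar xy xa ya pre_C; apply/negP => /existsP[u /and3P[_ _]].
apply/negP; rewrite -ltnNge.
have [/Sseq_P[j jr ->] | uS] := boolP (u \in Sseq).
  apply: leq_trans (leq_count_subseq _ (filter_subseq [in Cseq] _)).
  rewrite filter_rcons mem_Cseq // pre_C /= !inN_c_s // !thick //; lia.
apply: leq_trans (two_C_ndom_gt1 xr yr pre_C uS) _.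
by rewrite /ndom -cats1 count_cat leq_addr.
Qed.

Lemma thick_third_C_footprint X pre x y a : x < r -> y < r -> x != y ->
  filter [in Cseq] pre = [:: c x; c y] -> dns_step e X pre (c a) ->
  exists2 j, j < r & s j \notin pre.
Proof.
move=> xr yr xy pre_C /existsP[u /and3P[_ _ u_dom]].
have /Sseq_P[j jr uE] : u \in Sseq.
  by apply: contraLR u_dom => uS; rewrite -ltnNge (two_C_ndom_gt1 xr yr pre_C uS).
exists j => //; apply: contraTN u_dom => /splitPr pre_sj.
case: pre_sj pre_C => p1 p2; rewrite filter_cat /= (negbTE (s_notin_Cseq jr)) -filter_cat.
move=> pre_C; rewrite -ltnNge uE ndom_cat /ndom /= inN_refl addnCA add1n ltnS -count_cat.
apply: leq_trans (leq_count_subseq _ (filter_subseq [in Cseq] _)).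
rewrite pre_C /= !inN_c_s // !thick //; lia.
Qed.

Lemma filter_Cseq_pair p : uniq p -> count [in Cseq] p = 2 ->
  exists x y, [/\ x < r, y < r, x != y & filter [in Cseq] p = [:: c x; c y]].
Proof.
move=> up; rewrite -size_filter.
have : uniq (filter [in Cseq] p) by apply: filter_uniq.
have : all [in Cseq] (filter [in Cseq] p) by apply: filter_all.
case: (filter _ p) => [|x0 [|y0 []]] //= /and3P[/Cseq_P[x xr ->] /Cseq_P[y yr ->] _].
by rewrite inE andbT c_eqE // => xy _; exists x, y.
Qed.

Lemma thick_count_notin_H X t : is_dns e X t -> count (predC [in H]) t <= r + 2.
Proof.
case/and3P=> ut _ ok; apply: leq_trans (count_notin_H_le t) _.
have [C_le | C_gt] := leqP (count [in Cseq] t) 2; first by have := count_Sseq_le ut; lia.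
suff [S_lt C3] : count [in Sseq] t < r /\ count [in Cseq] t = 3 by lia.
have [p [v [q [tE /Cseq_P[a ar vE] p_C]]]] := split_at_count C_gt.
subst t v; move: ut ok; rewrite cat_uniq dns_ok_cat dns_ok_cons /=.
move=> /and4P[up /norP[ap _] _ _] /and3P[_ step_a ok_q].
have [x [y [xr yr xy pre_C]]] := filter_Cseq_pair up p_C.
have in_p z : c z \in filter [in Cseq] p -> c z \in p by rewrite mem_filter => /andP[].
have xa : x != a by apply: contraNneq ap => <-; rewrite in_p // pre_C mem_head.
have ya : y != a by apply: contraNneq ap => <-; rewrite in_p // pre_C !inE eqxx orbT.
have -> : q = [::].
  case: q ok_q {C_gt} => // w q; rewrite dns_ok_cons => /andP[step_w _].
  have := thick_no_step_after_third_C X w xr yr ar xy xa ya pre_C.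
  by rewrite step_w.
have [j jr sj_p] := thick_third_C_footprint xr yr xy pre_C step_a.
rewrite !count_cat p_C /= mem_Cseq //; split=> //.
have : count [in Sseq] (s j :: p ++ [:: c a]) <= r.
  apply: count_Sseq_le; rewrite /= cat_uniq up /= (negbTE ap) mem_cat (negbTE sj_p).
  by rewrite mem_seq1 (negbTE (s_neq_c jr ar)).
by rewrite /= mem_Sseq // count_cat.
Qed.

Lemma thick_dns_ok (X : {set T}) pre :
  (forall i, i < r -> s i \in X) -> all [in H] pre ->
  dns_ok e X pre (Sseq ++ [:: c 0; c 1]).
Proof.
move=> SX preH; rewrite dns_ok_cat; apply/andP; split.
  apply: dns_ok_map_iota => i ir; apply/existsP; exists (s i).
  by rewrite SX // inN_refl ndom_cat ndom_H_s // ndom_S_prefix.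
have r0 : 0 < r := ltnW r_ge2.
rewrite !dns_ok_cons andbT; apply/andP; split; apply/existsP.
- exists (s 1); rewrite SX // inN_c_s // thick //= ndom_cat ndom_H_s //.
  exact: ndom_Sseq_le1.
- exists (s 0); rewrite SX // inN_c_s // thick //= -cats1 !ndom_cat ndom_H_s //.
  by rewrite add0n {2}/ndom /= inN_c_s // thick // !addn0; apply: ndom_Sseq_le1.
Qed.

End Thick.

Lemma thin_dns_ok (X : {set T}) pre : spider_thin e r s c ->
  (forall i, i < r -> s i \in X) -> all [in H] pre ->
  dns_ok e X pre (Cseq ++ Sseq).
Proof.
move=> thin SX preH; rewrite dns_ok_cat; apply/andP; split.
  apply: dns_ok_map_iota => i ir; apply/existsP; exists (s i).
  rewrite SX // inN_c_s // thin // eqxx ndom_cat ndom_H_s // /ndom count_pred0_in //.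
  move=> w /mapP[k]; rewrite mem_iota => /andP[_ ki] ->.
  by rewrite inN_c_s ?thin ?gtn_eqF // (ltn_trans ki ir).
apply: dns_ok_map_iota => i ir; apply/existsP; exists (s i).
rewrite SX // inN_refl !ndom_cat ndom_H_s // ndom_S_prefix // addn0.
rewrite /ndom count_map (eq_in_count (a2 := pred1 i)).
  by rewrite count_uniq_mem ?iota_uniq ?leq_b1.
by move=> k; rewrite mem_iota => /andP[_ kr] /=; rewrite inN_c_s // thin // eq_sym.
Qed.

Section ExtremalSequence.
Variable cs : seq T.
Hypotheses (uniq_cs : uniq cs) (cs_CS : {subset cs <= CS_set r s c}).
Hypothesis cs_ok : forall (X : {set T}) pre,
  (forall i, i < r -> s i \in X) -> all [in H] pre -> dns_ok e X pre cs.
Hypothesis notin_H_bound : forall X t,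
  is_dns e X t -> count (predC [in H]) t <= size cs.

Lemma mdns_CS_set : is_mdns e (CS_set r s c) cs.
Proof.
split.
  rewrite /is_dns uniq_cs /=; apply/andP; split; first by apply/allP => x /cs_CS.
  by apply: cs_ok => // i ir; rewrite in_CS_set mem_Sseq.
move=> t /[dup] /and3P[_ /allP tCS _] /notin_H_bound.
by rewrite (eq_in_count (a2 := predT)) ?count_predT // => x /tCS /CS_set_notin_H.
Qed.

Lemma mdns_setT_cat TH : is_mdns e H TH -> is_mdns e [set: T] (TH ++ cs).
Proof.
case=> dTH TH_max; have /and3P[uTH /allP TH_H okTH] := dTH; split.
  rewrite /is_dns cat_uniq uTH uniq_cs andbT; apply/and3P; split.
  - by apply/hasPn => x /cs_CS /CS_set_notin_H; apply: contra => /TH_H.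
  - by apply/allP => x; rewrite in_setT.
  rewrite dns_ok_cat (dns_ok_subset (subsetT H) okTH) /=.
  by apply: cs_ok => [i _|]; [apply: in_setT | apply/allP].
move=> t dt; rewrite size_cat -(count_predC [in H] t) leq_add ?(notin_H_bound dt) //.
by rewrite -size_filter; apply: TH_max; apply: is_dns_filter_H dt.
Qed.

Lemma spider_gamma_mdns TH : is_mdns e H TH ->
  gamma_gr2 e [set: T] = gamma_gr2 e (CS_set r s c) + gamma_gr2 e H
  /\ is_mdns e [set: T] (TH ++ cs).
Proof.
move=> mTH; have mG := mdns_setT_cat mTH; split=> //.
rewrite (gamma_gr2_mdns mG) (gamma_gr2_mdns mdns_CS_set) (gamma_gr2_mdns mTH).
by rewrite size_cat addnC.
Qed.

End ExtremalSequence.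

Lemma thin_spider_gamma_mdns TH : spider_thin e r s c -> is_mdns e H TH ->
  gamma_gr2 e [set: T] = gamma_gr2 e (CS_set r s c) + gamma_gr2 e H
  /\ is_mdns e [set: T] (TH ++ Cseq ++ Sseq).
Proof.
move=> thin; apply: spider_gamma_mdns => [||X pre|X t /and3P[ut _ _]].
- rewrite cat_uniq uniq_Cseq uniq_Sseq andbT /=.
  by apply/hasPn => _ /Sseq_P[j jr ->]; apply: s_notin_Cseq.
- by move=> x; rewrite in_CS_set mem_cat orbC.
- exact: thin_dns_ok.
- apply: leq_trans (count_notin_H_le t) _; rewrite size_cat !size_map size_iota.
  by rewrite leq_add ?count_Sseq_le ?count_Cseq_le.
Qed.

Lemma thick_spider_gamma_mdns TH : spider_thick e r s c -> is_mdns e H TH ->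
  gamma_gr2 e [set: T] = gamma_gr2 e (CS_set r s c) + gamma_gr2 e H
  /\ is_mdns e [set: T] (TH ++ Sseq ++ [:: c 0; c 1]).
Proof.
move=> thick; have r0 : 0 < r := ltnW r_ge2.
apply: spider_gamma_mdns => [||X pre|X t dt].
- by rewrite cat_uniq uniq_Sseq /= inE c_eqE // orbF negb_or !c_notin_Sseq.
- move=> x; rewrite in_CS_set mem_cat !inE => /orP[-> // | /orP[] /eqP ->].
  + by rewrite mem_Cseq ?orbT.
  + by rewrite mem_Cseq ?orbT.
- exact: thick_dns_ok.
- by rewrite size_cat size_map size_iota; apply: thick_count_notin_H dt.
Qed.

End Spider.

Theorem proposition8 (T : finType) (e : rel T) (r : nat) (s c : nat -> T)
    (H : {set T}) (TH : seq T) :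
  symmetric e -> irreflexive e ->
  spider e r s c H ->
  (spider_thin e r s c \/ (spider_thick e r s c /\ 3 <= r)) ->
  is_mdns e H TH ->
  gamma_gr2 e [set: T] = gamma_gr2 e (CS_set r s c) + gamma_gr2 e H
  /\ (spider_thin e r s c ->
        is_mdns e [set: T] (TH ++ map c (iota 0 r) ++ map s (iota 0 r)))
  /\ (spider_thick e r s c ->
        is_mdns e [set: T] (TH ++ map s (iota 0 r) ++ [:: c 0; c 1])).
Proof.
move=> e_sym _ G_spider kind mTH.
have r0 : 0 < r by case: G_spider => [[/ltnW]].
have not_thin_thick : spider_thin e r s c -> ~ spider_thick e r s c.
  by move=> thin thick; move: (thin 0 0 r0 r0); rewrite thick.
case: kind => [thin | [thick _]].
- have [gamma_eq mdns] := thin_spider_gamma_mdns e_sym G_spider thin mTH.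
  by split=> //; split=> // /(not_thin_thick thin).
- have [gamma_eq mdns] := thick_spider_gamma_mdns e_sym G_spider thick mTH.
  by split=> //; split=> // /not_thin_thick.
Qed.
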